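(* Let $X$ be a real Hilbert space, $f,g:X\to\mathbb{R}\cup\{+\infty\}$ proper $\Phi_{lsc}$-convex functions, $\alpha\in\mathbb{R}$ and $\varepsilon\ge0$. Let $\bar x\in\mathrm{dom}(f)\cap\mathrm{dom}(g)$ with $f(\bar x)\ge\alpha$ and $g(\bar x)\ge\alpha$. If $f$ and $g$ satisfy the zero subgradient condition $ZS(\varepsilon,\bar x)$, i.e. $0\in\mathrm{co}\big(\partial^\varepsilon_{lsc}f(\bar x)\cup\partial^\varepsilon_{lsc}g(\bar x)\big)$, then there exist $\varphi_1\in\mathrm{supp}(f)$ and $\varphi_2\in\mathrm{supp}(g)$ such that $\{x:\varphi_1(x)<\alpha-\varepsilon\}\cap\{x:\varphi_2(x)<\alpha-\varepsilon\}=\emptyset$.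
   Context: $\Phi_{lsc}$ is the class of functions $\varphi(x)=-a\|x\|^2+\langle v,x\rangle+c$ ($a\ge0$, $v\in X^*$, $c\in\mathbb{R}$); $\mathrm{supp}(f)=\{\varphi\in\Phi_{lsc}:\varphi\le f\}$; $f$ is $\Phi_{lsc}$-convex if $f=\sup\mathrm{supp}(f)$ pointwise; proper means $\mathrm{supp}(f)\ne\emptyset$ and $\mathrm{dom}(f)\ne\emptyset$. For $\varepsilon\ge0$, $\partial^\varepsilon_{lsc}f(\bar x)$ is the set of $(a,v)\in\mathbb{R}_+\times X^*$ with $f(x)-f(\bar x)\ge\langle v,x-\bar x\rangle-a\|x\|^2+a\|\bar x\|^2-\varepsilon$ for all $x\in X$; this is a subset of the vector space $\mathbb{R}\times X^*$, $\mathrm{co}$ denotes convex hull there, and $0$ means $(0,0)$. For $x_1\in\mathrm{dom}(f)$, $x_2\in\mathrm{dom}(g)$, $f,g$ satisfy $ZS(\varepsilon,x_1,x_2)$ if $0\in\mathrm{co}(\partial^\varepsilon_{lsc}f(x_1)\cup\partial^\varepsilon_{lsc}g(x_2))$; $ZS(\varepsilon,\bar x)$ means $ZS(\varepsilon,\bar x,\bar x)$. *)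

From Stdlib Require Import Reals List.
Open Scope R_scope.
Set Implicit Arguments.

Record HilbertSpace := {
  hs_car :> Type;
  hs_zero : hs_car;
  hs_add : hs_car -> hs_car -> hs_car;
  hs_opp : hs_car -> hs_car;
  hs_scal : R -> hs_car -> hs_car;
  hs_inner : hs_car -> hs_car -> R;
  hs_addA : forall x y z, hs_add x (hs_add y z) = hs_add (hs_add x y) z;
  hs_addC : forall x y, hs_add x y = hs_add y x;
  hs_add0 : forall x, hs_add x hs_zero = x;
  hs_addN : forall x, hs_add x (hs_opp x) = hs_zero;
  hs_scal1 : forall x, hs_scal 1 x = x;
  hs_scalA : forall a b x, hs_scal a (hs_scal b x) = hs_scal (a * b) x;
  hs_scalDr : forall a x y, hs_scal a (hs_add x y) = hs_add (hs_scal a x) (hs_scal a y);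
  hs_scalDl : forall a b x, hs_scal (a + b) x = hs_add (hs_scal a x) (hs_scal b x);
  hs_innerC : forall x y, hs_inner x y = hs_inner y x;
  hs_innerDl : forall x y z, hs_inner (hs_add x y) z = hs_inner x z + hs_inner y z;
  hs_innerZl : forall a x y, hs_inner (hs_scal a x) y = a * hs_inner x y;
  hs_inner_pos : forall x, 0 <= hs_inner x x;
  hs_inner_def : forall x, hs_inner x x = 0 -> x = hs_zero;
  hs_complete : forall u : nat -> hs_car,
    (forall eps, 0 < eps -> exists N, forall m n, (N <= m)%nat -> (N <= n)%nat ->
        sqrt (hs_inner (hs_add (u m) (hs_opp (u n))) (hs_add (u m) (hs_opp (u n)))) < eps) ->
    exists l, forall eps, 0 < eps -> exists N, forall n, (N <= n)%nat ->
        sqrt (hs_inner (hs_add (u n) (hs_opp l)) (hs_add (u n) (hs_opp l))) < eps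
}.

Arguments hs_zero {h}. Arguments hs_add {h}. Arguments hs_opp {h}.
Arguments hs_scal {h}. Arguments hs_inner {h}.

Inductive ERbar := Fin (r : R) | PInf.

Definition ERle (a b : ERbar) : Prop :=
  match a, b with
  | _, PInf => True
  | PInf, Fin _ => False
  | Fin r, Fin s => r <= s
  end.

Definition RltER (r : R) (b : ERbar) : Prop :=
  match b with Fin s => r < s | PInf => True end.

Section Phi.
Context {X : HilbertSpace}.

Definition nsq (x : X) : R := hs_inner x x.

(** φ(x) = -a‖x‖² + ⟨v,x⟩ + c ; X* identified with X via Riesz. *)
Definition phi (a : R) (v : X) (c : R) (x : X) : R := - a * nsq x + hs_inner v x + c.

(** (a,v,c) with a >= 0 represents an element of Φ_lsc lying in supp(f) *)
Definition in_supp (f : X -> ERbar) (a : R) (v : X) (c : R) : Prop :=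
  0 <= a /\ forall x, ERle (Fin (phi a v c x)) (f x).

Definition in_dom (f : X -> ERbar) (x : X) : Prop := exists r, f x = Fin r.

Definition proper (f : X -> ERbar) : Prop :=
  (exists a v c, in_supp f a v c) /\ (exists x, in_dom f x).

(** f = sup supp(f) pointwise (the inequality sup <= f is built into supp). *)
Definition Phi_convex (f : X -> ERbar) : Prop :=
  forall x r, RltER r (f x) -> exists a v c, in_supp f a v c /\ r < phi a v c x.

(** (a,v) ∈ ∂^ε_lsc f(xbar) ; only meaningful for xbar ∈ dom f. *)
Definition eps_subdiff (f : X -> ERbar) (eps : R) (xbar : X) (a : R) (v : X) : Prop :=
  match f xbar with
  | Fin fb => 0 <= a /\ forall x,
      ERle (Fin (fb + hs_inner v (hs_add x (hs_opp xbar)) - a * nsq x + a * nsq xbar - eps)) (f x)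
  | PInf => False
  end.

Fixpoint wsum (l : list (R * (R * X))) : R * X :=
  match l with
  | nil => (0, hs_zero)
  | (lam, (a, v)) :: t =>
      let (s, w) := wsum t in (lam * a + s, hs_add (hs_scal lam v) w)
  end.

Definition in_co (S : R -> X -> Prop) (p : R * X) : Prop :=
  exists l : list (R * (R * X)),
    (forall lam a v, In (lam, (a, v)) l -> 0 <= lam /\ S a v) /\
    fold_right (fun e s => fst e + s) 0 l = 1 /\
    wsum l = p.

Definition ZS (f g : X -> ERbar) (eps : R) (x1 x2 : X) : Prop :=
  in_co (fun a v => eps_subdiff f eps x1 a v \/ eps_subdiff g eps x2 a v) (0, hs_zero).

End Phi.

(* Since the quadratic coefficients are nonnegative and the convex combination
   vanishes, all of them drop out.  Splitting the combination into its
   f-part (total weight lam, vector V) and its g-part (weight mu = 1 - lam,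
   vector -V), the subgradient inequalities sum up to the affine minorants
   x |-> f(xbar) - eps + <V, x - xbar> / lam of f and
   x |-> g(xbar) - eps - <V, x - xbar> / mu of g.  Below level alpha - eps the
   first forces <V, x - xbar> < 0 and the second <V, x - xbar> > 0.  A zero
   weight forces V = 0, and then the other minorant is a constant at least
   alpha - eps. *)
From Stdlib Require Import Reals List Lra.
Open Scope R_scope.

Section HilbertAlgebra.
Variable X : HilbertSpace.

Lemma hs_scal0 (x : X) : hs_scal 0 x = hs_zero.
Proof.
  set (s := hs_scal 0 x).
  assert (Hss : s = hs_add s s) by (unfold s; rewrite <- hs_scalDl; f_equal; lra).
  assert (E : hs_add (hs_add s s) (hs_opp s) = hs_zero) by (rewrite <- Hss; apply hs_addN).
  rewrite <- hs_addA, hs_addN, hs_add0 in E. exact E.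
Qed.

Lemma hs_inner0l (y : X) : hs_inner hs_zero y = 0.
Proof. rewrite <- (hs_scal0 hs_zero), hs_innerZl. ring. Qed.

Lemma hs_innerNl (y z : X) : hs_inner (hs_opp y) z = - hs_inner y z.
Proof.
  assert (H := hs_innerDl X y (hs_opp y) z). rewrite hs_addN, hs_inner0l in H. lra.
Qed.

Lemma hs_innerBr (v x y : X) :
  hs_inner v (hs_add x (hs_opp y)) = hs_inner v x - hs_inner v y.
Proof. rewrite hs_innerC, hs_innerDl, hs_innerNl, (hs_innerC X x), (hs_innerC X y). ring. Qed.

Lemma hs_add_eq0_opp (x y : X) : hs_add x y = hs_zero -> y = hs_opp x.
Proof.
  intros Hxy.
  rewrite <- (hs_add0 X y), <- (hs_addN X x), hs_addA, (hs_addC X y x), Hxy.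
  rewrite hs_addC. apply hs_add0.
Qed.

End HilbertAlgebra.

Section ScaledMinorant.
Context {X : HilbertSpace}.
Variables (h : X -> ERbar) (c : R) (xbar : X).

(* The inequality inherited by a nonnegative combination, with total weight
   [lam], of quadratic minorants of [h] through the level [c] at [xbar]. *)
Record scaled_minorant (lam A : R) (V : X) : Prop := {
  scaled_minorant_quad_ge0 : 0 <= A;
  scaled_minorant_weight0 : lam = 0 -> A = 0 /\ V = hs_zero;
  scaled_minorant_le : forall x r, h x = Fin r ->
    lam * c + hs_inner V (hs_add x (hs_opp xbar)) - A * nsq x + A * nsq xbar <= lam * r
}.

Lemma scaled_minorant0 : scaled_minorant 0 0 hs_zero.
Proof.
  split; [lra | auto |]. intros x r _. rewrite hs_inner0l. lra.
Qed.

Lemma scaled_minorant_add l a v lam A V :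
  0 <= l -> 0 <= a ->
  (forall x r, h x = Fin r ->
     c + hs_inner v (hs_add x (hs_opp xbar)) - a * nsq x + a * nsq xbar <= r) ->
  0 <= lam -> scaled_minorant lam A V ->
  scaled_minorant (l + lam) (l * a + A) (hs_add (hs_scal l v) V).
Proof.
  intros Hl Ha Hv Hlam [HA Hdeg Hle]. split.
  - nra.
  - intros E. assert (l = 0) by lra. subst l.
    destruct Hdeg as [-> ->]; [lra |].
    rewrite hs_scal0, hs_add0. split; [ring | reflexivity].
  - intros x r Hr. specialize (Hle x r Hr). specialize (Hv x r Hr).
    rewrite hs_innerDl, hs_innerZl.
    assert (Hlv := Rmult_le_compat_l l _ _ Hl Hv).
    set (d := hs_inner v (hs_add x (hs_opp xbar))) in *.
    set (e := hs_inner V (hs_add x (hs_opp xbar))) in *.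
    nra.
Qed.

Lemma scaled_minorant_affine lam V :
  0 < lam -> scaled_minorant lam 0 V ->
  in_supp h 0 (hs_scal (/ lam) V) (c - / lam * hs_inner V xbar).
Proof.
  intros Hlam [_ _ Hle]. split; [lra |]. intros x. unfold ERle.
  destruct (h x) as [r |] eqn:Hr; auto. specialize (Hle x r Hr).
  rewrite hs_innerBr in Hle. unfold phi. rewrite hs_innerZl.
  apply (Rmult_le_reg_l lam); [exact Hlam |].
  replace (lam * (- 0 * nsq x + / lam * hs_inner V x + (c - / lam * hs_inner V xbar)))
    with (lam * c + (hs_inner V x - hs_inner V xbar)) by (field; lra).
  lra.
Qed.

Lemma scaled_minorant_supp lam V :
  proper h -> 0 <= lam -> scaled_minorant lam 0 V ->
  exists a v c', in_supp h a v c' /\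
    forall x, phi a v c' x < c -> lam = 0 \/ hs_inner V (hs_add x (hs_opp xbar)) < 0.
Proof.
  intros [[a [v [c' Hsupp]]] _] Hlam Hmin.
  destruct (Req_dec lam 0) as [-> | Hlam0].
  - exists a, v, c'. split; auto.
  - exists 0, (hs_scal (/ lam) V), (c - / lam * hs_inner V xbar).
    split; [apply scaled_minorant_affine; auto; lra |].
    intros x Hx. right. unfold phi in Hx. rewrite hs_innerZl in Hx. rewrite hs_innerBr.
    assert (Hinv : 0 < / lam) by (apply Rinv_0_lt_compat; lra).
    nra.
Qed.

End ScaledMinorant.

Lemma eps_subdiff_scaled_minorant (X : HilbertSpace) (h : X -> ERbar) eps xbar hb l a v lam A V :
  h xbar = Fin hb -> 0 <= l -> eps_subdiff h eps xbar a v ->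
  0 <= lam -> scaled_minorant h (hb - eps) xbar lam A V ->
  scaled_minorant h (hb - eps) xbar (l + lam) (l * a + A) (hs_add (hs_scal l v) V).
Proof.
  intros Hhb Hl Hsub. unfold eps_subdiff in Hsub. rewrite Hhb in Hsub.
  destruct Hsub as [Ha Hsub].
  apply scaled_minorant_add; auto.
  intros x r Hr. specialize (Hsub x). rewrite Hr in Hsub. simpl in Hsub. lra.
Qed.

Section ZeroSubgradient.
Variables (X : HilbertSpace) (f g : X -> ERbar) (eps : R) (xbar : X) (fb gb : R).
Hypotheses (Hfb : f xbar = Fin fb) (Hgb : g xbar = Fin gb).

Lemma wsum_split (l : list (R * (R * X))) :
  (forall lam a v, In (lam, (a, v)) l -> 0 <= lam /\
     (eps_subdiff f eps xbar a v \/ eps_subdiff g eps xbar a v)) ->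
  exists lam mu Fa Fv Ga Gv, 0 <= lam /\ 0 <= mu /\
    scaled_minorant f (fb - eps) xbar lam Fa Fv /\
    scaled_minorant g (gb - eps) xbar mu Ga Gv /\
    fold_right (fun e s => fst e + s) 0 l = lam + mu /\
    wsum l = (Fa + Ga, hs_add Fv Gv).
Proof.
  induction l as [| [l0 [a v]] t IH]; intros Hin.
  - exists 0, 0, 0, hs_zero, 0, hs_zero.
    do 4 (split; [lra || apply scaled_minorant0 |]).
    split; simpl; [ring | rewrite (hs_add0 X); f_equal; ring].
  - destruct IH as [lam [mu [Fa [Fv [Ga [Gv [Hlam [Hmu [HF [HG [Hs Hw]]]]]]]]]]].
    { intros; apply (Hin lam a0 v0); right; auto. }
    destruct (Hin l0 a v (or_introl eq_refl)) as [Hl0 [Hsubf | Hsubg]].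
    + exists (l0 + lam), mu, (l0 * a + Fa), (hs_add (hs_scal l0 v) Fv), Ga, Gv.
      split; [lra | split; [lra |]].
      split; [apply (eps_subdiff_scaled_minorant X f eps xbar fb); auto | split; [exact HG |]].
      split; simpl; [rewrite Hs; ring | rewrite Hw, hs_addA; f_equal; ring].
    + exists lam, (l0 + mu), Fa, Fv, (l0 * a + Ga), (hs_add (hs_scal l0 v) Gv).
      split; [lra | split; [lra |]].
      split; [exact HF | split; [apply (eps_subdiff_scaled_minorant X g eps xbar gb); auto |]].
      split; simpl; [rewrite Hs; ring |].
      rewrite Hw, hs_addA, (hs_addC X (hs_scal l0 v) Fv), <- hs_addA. f_equal; ring.
Qed.

Lemma ZS_split :
  ZS f g eps xbar xbar ->
  exists lam mu V, 0 <= lam /\ 0 <= mu /\ lam + mu = 1 /\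
    scaled_minorant f (fb - eps) xbar lam 0 V /\
    scaled_minorant g (gb - eps) xbar mu 0 (hs_opp V).
Proof.
  intros [l [Hin [Hsum Hw]]].
  destruct (wsum_split l Hin)
    as [lam [mu [Fa [Fv [Ga [Gv [Hlam [Hmu [HF [HG [Hs Hw']]]]]]]]]]].
  rewrite Hw' in Hw. injection Hw as HA HV.
  assert (HFa : Fa = 0) by (destruct HF, HG; lra).
  assert (HGa : Ga = 0) by (destruct HF, HG; lra).
  subst Fa Ga. rewrite (hs_add_eq0_opp X Fv Gv HV) in HG.
  exists lam, mu, Fv. do 3 (split; [lra |]). split; assumption.
Qed.

End ZeroSubgradient.

Theorem mainTheorem11 (X : HilbertSpace) (f g : X -> ERbar) (alpha eps : R) (xbar : X) :
  proper f -> proper g -> Phi_convex f -> Phi_convex g ->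
  0 <= eps ->
  in_dom f xbar -> in_dom g xbar ->
  ERle (Fin alpha) (f xbar) -> ERle (Fin alpha) (g xbar) ->
  ZS f g eps xbar xbar ->
  exists (a1 : R) (v1 : X) (c1 : R) (a2 : R) (v2 : X) (c2 : R),
    in_supp f a1 v1 c1 /\ in_supp g a2 v2 c2 /\
    (forall x : X, ~ (phi a1 v1 c1 x < alpha - eps /\ phi a2 v2 c2 x < alpha - eps)).
Proof.
  intros Hpf Hpg _ _ _ [fb Hfb] [gb Hgb] Halpha_f Halpha_g HZS.
  rewrite Hfb in Halpha_f. rewrite Hgb in Halpha_g. simpl in Halpha_f, Halpha_g.
  destruct (ZS_split X f g eps xbar fb gb Hfb Hgb HZS)
    as [lam [mu [V [Hlam [Hmu [Hsum [HF HG]]]]]]].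
  destruct (scaled_minorant_supp f _ _ _ _ Hpf Hlam HF) as [a1 [v1 [c1 [Hs1 H1]]]].
  destruct (scaled_minorant_supp g _ _ _ _ Hpg Hmu HG) as [a2 [v2 [c2 [Hs2 H2]]]].
  exists a1, v1, c1, a2, v2, c2. split; [exact Hs1 | split; [exact Hs2 |]].
  intros x [Hx1 Hx2].
  assert (HV0 : lam = 0 \/ mu = 0 -> hs_inner V (hs_add x (hs_opp xbar)) = 0).
  { intros [Hz | Hz].
    - destruct (scaled_minorant_weight0 _ _ _ _ _ _ HF Hz) as [_ ->]. apply hs_inner0l.
    - destruct (scaled_minorant_weight0 _ _ _ _ _ _ HG Hz) as [_ HV].
      assert (HN := hs_innerNl X V (hs_add x (hs_opp xbar))).
      rewrite HV, hs_inner0l in HN. lra. }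
  destruct (H1 x ltac:(lra)) as [Hl0 | Hneg]; destruct (H2 x ltac:(lra)) as [Hm0 | Hpos];
    try rewrite hs_innerNl in Hpos.
  - lra.
  - specialize (HV0 (or_introl Hl0)). lra.
  - specialize (HV0 (or_intror Hm0)). lra.
  - lra.
Qed.
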